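(* For the iterates defined below, $$\|v_n\|_2\ge\sqrt{\eta}\cdot\Big(\sum_{i=1}^n\langle\phi(x_i),v_{i-1}\rangle^2\Big)^{1/2}.$$
   Context: Setting: $\phi(x_1),\dots,\phi(x_n)\in\mathbb{R}^d$ are feature vectors of samples $x_1,\dots,x_n$; $\eta\in(0,0.1)$ is a learning rate; $v_0\in\mathbb{R}^d$ is nonzero and $v_i=v_{i-1}+\eta\langle\phi(x_i),v_{i-1}\rangle\phi(x_i)$ for $i\in[n]$. *)

From HB Require Import structures.
From mathcomp Require Import all_boot all_order all_algebra.
Set Implicit Arguments. Unset Strict Implicit. Unset Printing Implicit Defensive.
Import Order.TTheory GRing.Theory Num.Theory.
Local Open Scope ring_scope.

Definition dotv {R : rcfType} {d : nat} (u v : 'rV[R]_d) : R :=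
  \sum_(k < d) u 0 k * v 0 k.

Definition norm2 {R : rcfType} {d : nat} (v : 'rV[R]_d) : R := Num.sqrt (dotv v v).

(* Iterates: v_0 given, v_i = v_{i-1} + eta <phi(x_i), v_{i-1}> phi(x_i), i >= 1.
   Samples are indexed x_1, x_2, ... by a function on nat (x 0 unused). *)
Fixpoint oja_iter {R : rcfType} {d : nat} {X : Type} (phi : X -> 'rV[R]_d)
    (x : nat -> X) (eta : R) (v0 : 'rV[R]_d) (i : nat) : 'rV[R]_d :=
  match i with
  | 0 => v0
  | j.+1 => let v := oja_iter phi x eta v0 j in
            v + (eta * dotv (phi (x j.+1)) v) *: phi (x j.+1)
  end.

(* Writing a_i = <phi(x_i), v_(i-1)>, one step adds 2 eta a_i^2 + eta^2 a_i^2 |phi(x_i)|^2 >= eta a_i^2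
   to the squared norm, so |v_n|^2 >= |v_0|^2 + eta (a_1^2 + ... + a_n^2). *)
From HB Require Import structures.
From mathcomp Require Import all_boot all_order all_algebra.
From mathcomp Require Import ring lra.
Set Implicit Arguments. Unset Strict Implicit. Unset Printing Implicit Defensive.
Import Order.TTheory GRing.Theory Num.Theory.
Local Open Scope ring_scope.

Lemma dotvv_ge0 (R : rcfType) d (v : 'rV[R]_d) : 0 <= dotv v v.
Proof. by apply: sumr_ge0 => k _; rewrite -expr2 sqr_ge0. Qed.

Lemma dotvv_addZr (R : rcfType) d (v p : 'rV[R]_d) (c : R) :
  dotv (v + c *: p) (v + c *: p) =
  dotv v v + 2 * c * dotv p v + c ^+ 2 * dotv p p.
Proof.
rewrite /dotv !mulr_sumr -!big_split /=; apply: eq_bigr => k _.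
by rewrite !mxE; ring.
Qed.

Lemma dotvv_oja_step_ge (R : rcfType) d (v p : 'rV[R]_d) (eta : R) :
  0 <= eta ->
  dotv v v + eta * dotv p v ^+ 2 <=
    dotv (v + (eta * dotv p v) *: p) (v + (eta * dotv p v) *: p).
Proof.
move=> eta_ge0; rewrite dotvv_addZr -addrA lerD2l.
set a := dotv p v.
have a2_ge0 : 0 <= eta * a ^+ 2 by rewrite mulr_ge0 ?sqr_ge0.
have quad_ge0 : 0 <= (eta * a) ^+ 2 * dotv p p by rewrite mulr_ge0 ?sqr_ge0 ?dotvv_ge0.
have -> : 2 * (eta * a) * a = 2 * (eta * a ^+ 2) by ring.
lra.
Qed.

Lemma oja_iter_dotvv_ge (R : rcfType) d (X : Type) (phi : X -> 'rV[R]_d)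
    (x : nat -> X) (eta : R) (v0 : 'rV[R]_d) (n : nat) :
  0 <= eta ->
  eta * (\sum_(1 <= i < n.+1) dotv (phi (x i)) (oja_iter phi x eta v0 i.-1) ^+ 2)
    <= dotv (oja_iter phi x eta v0 n) (oja_iter phi x eta v0 n).
Proof.
move=> eta_ge0; elim: n => [|n IHn].
  by rewrite big_geq // mulr0 dotvv_ge0.
rewrite big_nat_recr //= mulrDr.
apply: le_trans (dotvv_oja_step_ge _ _ eta_ge0).
by rewrite lerD2r.
Qed.

Theorem lemmaC7 (R : rcfType) (d : nat) (X : Type) (phi : X -> 'rV[R]_d)
    (x : nat -> X) (eta : R) (v0 : 'rV[R]_d) (n : nat)
    (heta0 : 0 < eta) (heta1 : eta < 1 / 10) (hv0 : v0 != 0) :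
  norm2 (oja_iter phi x eta v0 n) >=
    Num.sqrt eta *
    Num.sqrt (\sum_(1 <= i < n.+1)
                (dotv (phi (x i)) (oja_iter phi x eta v0 i.-1)) ^+ 2).
Proof.
rewrite /norm2 -sqrtrM ?ler_sqrt ?dotvv_ge0 //; last exact: ltW.
exact/oja_iter_dotvv_ge/ltW.
Qed.
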